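(* Let $\mathcal{S}\subseteq\mathcal{X}\times\mathcal{Y}$ and $f:\mathcal{X}\times\mathcal{Y}\to\mathcal{V}$. For every $(Q_0,\dots,Q_{|\mathcal{Y}|-1})\in\mathcal{Q}_n^{|\mathcal{Y}|}$, the compatible hyperedge $e(Q_0,\dots,Q_{|\mathcal{Y}|-1})$ is solvable for $(\mathcal{S},f)$; furthermore there exists $\tilde e\in\mathcal{E}(\mathcal{S},f)$ with $e(Q_0,\dots,Q_{|\mathcal{Y}|-1})\subseteq\tilde e$.
   Context: Finite alphabets, $\mathcal{Y}=\{0,\dots,|\mathcal{Y}|-1\}$. $\mathcal{Q}_n=\mathcal{P}_n(\mathcal{V})$, the set of types of sequences in $\mathcal{V}^n$. A symbol $a\in\mathcal{X}$ is compatible with $(Q_0,\dots,Q_{|\mathcal{Y}|-1})$ if for all $b_1,b_2$ with $(a,b_1),(a,b_2)\in\mathcal{S}$: $nQ_{b_1}(v)-nQ_{b_2}(v)=\mathbf{1}[f(a,b_1)=v]-\mathbf{1}[f(a,b_2)=v]$ for all $v$; $e(Q_0,\dots,Q_{|\mathcal{Y}|-1})$ is the set of compatible symbols. For $\mathcal{A}\times\mathcal{B}\subseteq\mathcal{X}\times\mathcal{Y}$, a simple loop is a set $\{(a_0,b_0),(a_0,b_1),(a_1,b_1),\dots,(a_{k-1},b_{k-1}),(a_{k-1},b_0)\}\subseteq(\mathcal{A}\times\mathcal{B})\cap\mathcal{S}$ with the $a_i$ pairwise distinct and the $b_i$ pairwise distinct; with $\mathcal{I}_+(v)=\{i:f(a_i,b_i)=v\}$,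 $\mathcal{I}_-(v)=\{i:f(a_i,b_{i+1\bmod k})=v\}$, $\mathcal{A}\times\mathcal{B}$ is solvable for $(\mathcal{S},f)$ if every simple loop in it has $|\mathcal{I}_+(v)|=|\mathcal{I}_-(v)|$ for all $v$. $e\subseteq\mathcal{X}$ is solvable if $e\times\mathcal{Y}$ is solvable; $\mathcal{E}(\mathcal{S},f)$ is the set of inclusion-maximal solvable subsets of $\mathcal{X}$. *)

From HB Require Import structures.
From mathcomp Require Import all_boot all_order all_algebra.
Set Implicit Arguments. Unset Strict Implicit. Unset Printing Implicit Defensive.
Import Order.TTheory GRing.Theory Num.Theory.

Local Open Scope ring_scope.

Definition is_type (V : finType) (n : nat) (Q : V -> rat) : Prop :=
  exists x : n.-tuple V, forall v, Q v = (count_mem v x)%:R / n%:R.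

Definition compat (X Y V : finType) (S : {set X * Y}) (f : X -> Y -> V)
    (n : nat) (Q : Y -> V -> rat) : {set X} :=
  [set a | [forall b1, forall b2,
     (((a, b1) \in S) && ((a, b2) \in S)) ==>
     [forall v, n%:R * Q b1 v - n%:R * Q b2 v ==
                ((f a b1 == v)%:R - (f a b2 == v)%:R : rat)]]].

(* A x B is solvable for (S,f): every simple loop
   {(a_0,b_0),(a_0,b_1),(a_1,b_1),...,(a_{k-1},b_{k-1}),(a_{k-1},b_0)}
   in (A x B) cap S (a_i pairwise distinct, b_i pairwise distinct)
   satisfies |I_+(v)| = |I_-(v)| for all v. *)
Definition solvable (X Y V : finType) (S : {set X * Y}) (f : X -> Y -> V)
    (A : {set X}) (B : {set Y}) : Prop :=
  forall (k : nat) (a : 'I_k -> X) (b : 'I_k -> Y),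
    injective a -> injective b ->
    (forall i, a i \in A) -> (forall i, b i \in B) ->
    (forall i, (a i, b i) \in S) ->
    (forall i, (a i, b (ordS i)) \in S) ->
    forall v : V,
      #|[set i | f (a i) (b i) == v]| = #|[set i | f (a i) (b (ordS i)) == v]|.

Definition solvable_set (X Y V : finType) (S : {set X * Y}) (f : X -> Y -> V)
    (e : {set X}) : Prop := solvable S f e [set: Y].

Definition maximal_solvable (X Y V : finType) (S : {set X * Y}) (f : X -> Y -> V)
    (e : {set X}) : Prop :=
  solvable_set S f e /\
  forall e' : {set X}, e \subset e' -> solvable_set S f e' -> e' = e.

(* Around a simple loop (a_i, b_i), compatibility of each a_i gives
   [1(f(a_i,b_i) = v) - 1(f(a_i,b_{i+1}) = v) = n Q_{b_i}(v) - n Q_{b_{i+1}}(v)];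
   summing over the loop, the right-hand side telescopes to zero, so
   |I_+(v)| = |I_-(v)|.
   The maximal solvable superset exists because X is finite. *)
From mathcomp Require Import all_boot all_order all_algebra.
From mathcomp Require Import boolp.
Import Order.TTheory GRing.Theory Num.Theory.

Set Implicit Arguments.
Unset Strict Implicit.

Local Open Scope ring_scope.

Lemma natr_card_set (I : finType) (P : pred I) :
  \sum_i (P i)%:R = #|[set i | P i]|%:R :> rat.
Proof.
rewrite -natr_sum -sum1_card [in RHS]big_mkcond /=.
by congr _%:R; apply: eq_bigr => i _; rewrite inE; case: (P i).
Qed.

Lemma compat_loopE (X Y V : finType) (S : {set X * Y}) (f : X -> Y -> V)
    (n : nat) (Q : Y -> V -> rat) a b1 b2 v :
  a \in compat S f n Q -> (a, b1) \in S -> (a, b2) \in S ->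
  (f a b1 == v)%:R - (f a b2 == v)%:R = n%:R * Q b1 v - n%:R * Q b2 v.
Proof.
rewrite inE => /forallP /(_ b1) /forallP /(_ b2) /implyP compat_a S1 S2.
by have /forallP /(_ v) /eqP -> := compat_a (introT andP (conj S1 S2)).
Qed.

Lemma compat_solvable (X Y V : finType) (S : {set X * Y}) (f : X -> Y -> V)
    (n : nat) (Q : Y -> V -> rat) : solvable_set S f (compat S f n Q).
Proof.
move=> k a b _ _ compat_a _ S_diag S_shift v.
have telescope : \sum_i ((f (a i) (b i) == v)%:R
                         - (f (a i) (b (ordS i)) == v)%:R) = 0 :> rat.
  under eq_bigr => i _ do
    rewrite (compat_loopE v (compat_a i) (S_diag i) (S_shift i)).
  by rewrite sumrB (reindex_inj (@ordS_inj k)) subrr.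
by apply/eqP; rewrite -(eqr_nat rat) -!natr_card_set -subr_eq0 -sumrB telescope.
Qed.

Lemma maximal_superset (T : finType) (P : {set T} -> Prop) (C : {set T}) :
  P C -> exists2 A : {set T},
    P A /\ (forall B : {set T}, A \subset B -> P B -> B = A) & C \subset A.
Proof.
move=> /asboolP PC.
have [A /maxsetP [/asboolP PA maxA] CA] :=
  @maxset_exists _ (fun B => `[< P B >]) C PC.
exists A => //; split=> // B AB PB.
by apply: maxA AB; apply/asboolP.
Qed.

Theorem lemma3 (X Y V : finType) (S : {set X * Y}) (f : X -> Y -> V)
    (n : nat) (Q : Y -> V -> rat) :
  (forall b, is_type n (Q b)) ->
  solvable_set S f (compat S f n Q) /\
  exists2 e' : {set X}, maximal_solvable S f e' & compat S f n Q \subset e'.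
Proof.
move=> _; split; first exact: compat_solvable.
have [e' maximal_e' sub_e'] := maximal_superset (@compat_solvable _ _ _ S f n Q).
by exists e'.
Qed.
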